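(* Let $M=M_1\oplus M_2$ be a right $R$-module that is quasi-pseudo principally injective. Then $M_1$ is principally $M_2$-injective and $M_2$ is principally $M_1$-injective.
   Context: All rings are associative with identity and all modules are unitary right $R$-modules. A submodule $N$ of $M$ is called $M$-cyclic if $N\cong M/L$ for some submodule $L$ of $M$ (equivalently, $N$ is the image of an endomorphism of $M$). $M$ is quasi-pseudo principally injective if for every $M$-cyclic submodule $A$ of $M$, every $R$-monomorphism $A\to M$ extends to an $R$-endomorphism of $M$. For modules $X,Y$, $X$ is principally $Y$-injective if for every $Y$-cyclic submodule $A$ of $Y$, every $R$-homomorphism $A\to X$ extends to an $R$-homomorphism $Y\to X$. *)

(* Right R-modules are modelled as left modules over the
   converse ring R^c: the right action x.r is written  r *: x. *)
From HB Require Import structures.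
From mathcomp Require Import all_boot all_order all_algebra.
Set Implicit Arguments. Unset Strict Implicit. Unset Printing Implicit Defensive.
Import GRing.Theory.
Local Open Scope ring_scope.

Notation rmodType R := (lmodType (R^c)%type).

Section Defs.
Variable R : pzRingType.

(* A (Prop-valued) subset A of Y is Y-cyclic: A is the image of an
   R-endomorphism of Y (such a set is automatically a submodule). *)
Definition is_cyclic_sub (Y : rmodType R) (A : Y -> Prop) : Prop :=
  exists h : {linear Y -> Y}, forall x, A x <-> exists y, x = h y.

Definition hom_on (Y X : rmodType R) (A : Y -> Prop) (f : Y -> X) : Prop :=
  (forall x y, A x -> A y -> f (x + y) = f x + f y) /\
  (forall (r : R^c) x, A x -> f (r *: x) = r *: f x).

Definition mono_on (Y X : rmodType R) (A : Y -> Prop) (f : Y -> X) : Prop :=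
  hom_on A f /\ (forall x y, A x -> A y -> f x = f y -> x = y).

Definition qppi (M : rmodType R) : Prop :=
  forall (A : M -> Prop) (f : M -> M), is_cyclic_sub A -> mono_on A f ->
    exists g : {linear M -> M}, forall x, A x -> g x = f x.

Definition princ_inj (X Y : rmodType R) : Prop :=
  forall (A : Y -> Prop) (f : Y -> X), is_cyclic_sub A -> hom_on A f ->
    exists g : {linear Y -> X}, forall x, A x -> g x = f x.

End Defs.

From HB Require Import structures.
From mathcomp Require Import all_boot all_order all_algebra.
Import GRing.Theory.

(* Let [M = X (+) Y] and let [f : A -> X] be a homomorphism on a [Y]-cyclic
   submodule [A] of [Y].  Seen inside [M], [A] is [M]-cyclic, and the graph map
   [a |-> a + f a] is a monomorphism on it, since projecting back to [Y]
   recovers [a].  An endomorphism [g] of [M] extending the graph map yields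
   the extension [prX \o g \o inY] of [f]. *)

Local Open Scope ring_scope.

Section SummandOfQuasiPseudoPrincipallyInjective.

Variables (R : pzRingType) (M X Y : rmodType R).
Variables (inX : {linear X -> M}) (prX : {linear M -> X}).
Variables (inY : {linear Y -> M}) (prY : {linear M -> Y}).
Hypotheses (inXK : cancel inX prX) (inYK : cancel inY prY).
Hypotheses (prX_inY : forall y, prX (inY y) = 0) (prY_inX : forall x, prY (inX x) = 0).

Definition image_in_sum (A : Y -> Prop) (m : M) : Prop := exists2 a, A a & m = inY a.

Definition graph_map (f : Y -> X) (m : M) : M := m + inX (f (prY m)).

Lemma is_cyclic_sub_image_in_sum {A : Y -> Prop} :
  is_cyclic_sub A -> is_cyclic_sub (image_in_sum A).
Proof.
move=> [h Ah]; exists (inY \o h \o prY) => m; split.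
- by move=> [a /Ah [y ->] ->]; exists (inY y); rewrite /= inYK.
- by move=> [z ->]; exists (h (prY z)) => //; apply/Ah; exists (prY z).
Qed.

Lemma mono_on_graph_map {A : Y -> Prop} {f : Y -> X} :
  hom_on A f -> mono_on (image_in_sum A) (graph_map f).
Proof.
move=> [fD fZ]; rewrite /graph_map; split; [split|].
- move=> _ _ [a Aa ->] [b Ab ->].
  by rewrite -linearD !inYK fD // !linearD addrACA.
- by move=> r _ [a Aa ->]; rewrite -linearZ !inYK fZ // !linearZ scalerDr.
- move=> _ _ [a _ ->] [b _ ->] /(congr1 prY).
  by rewrite !linearD !prY_inX !addr0 !inYK => ->.
Qed.

Lemma princ_inj_summand : qppi M -> princ_inj X Y.
Proof.
move=> Mqppi A f Acyc fhom.
have [g g_graph] := Mqppi _ _ (is_cyclic_sub_image_in_sum Acyc)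
                              (mono_on_graph_map fhom).
exists (prX \o g \o inY) => a Aa /=.
rewrite g_graph; last by exists a.
by rewrite /graph_map linearD prX_inY inXK inYK add0r.
Qed.

End SummandOfQuasiPseudoPrincipallyInjective.

Section ProductInjections.

Variables (R : pzRingType) (M1 M2 : rmodType R).

Definition in_fst (x : M1) : (M1 * M2)%type := (x, 0).
Definition in_snd (y : M2) : (M1 * M2)%type := (0, y).

Lemma in_fst_is_linear : linear in_fst.
Proof. by move=> r x y; rewrite /in_fst; congr pair; rewrite /= scaler0 addr0. Qed.

Lemma in_snd_is_linear : linear in_snd.
Proof. by move=> r x y; rewrite /in_snd; congr pair; rewrite /= scaler0 addr0. Qed.

HB.instance Definition _ := GRing.isLinear.Build _ _ _ _ in_fst in_fst_is_linear.
HB.instance Definition _ := GRing.isLinear.Build _ _ _ _ in_snd in_snd_is_linear.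

End ProductInjections.

Theorem proposition2p9 (R : pzRingType) (M1 M2 : rmodType R) :
  qppi (M1 * M2)%type -> princ_inj M1 M2 /\ princ_inj M2 M1.
Proof.
move=> Mqppi; split.
- exact: (@princ_inj_summand R _ M1 M2 (in_fst R M1 M2) fst (in_snd R M1 M2) snd).
- exact: (@princ_inj_summand R _ M2 M1 (in_snd R M1 M2) snd (in_fst R M1 M2) fst).
Qed.
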